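(* Let $d=(d_1,\ldots,d_n)$ be a degree sequence with $n\ge 3$, and let $m=\frac12\sum_i d_i$. There is a bridge-less cactus realization of $d$ if and only if $m\le\lfloor 1.5(n-1)\rfloor$ and $d_i$ is even for every $i$.
   Context: A degree sequence is a sequence $d=(d_1,\ldots,d_n)$ of integers with $d_i\in\{1,\ldots,n-1\}$, even sum, and $d_1\ge\cdots\ge d_n$. A realization of $d$ is a simple graph on $\{1,\ldots,n\}$ in which vertex $i$ has degree $d_i$. A cactus is a connected simple graph in which every edge lies on at most one cycle; it is bridge-less if no edge's removal disconnects it. *)

From mathcomp Require Import all_boot.
Set Implicit Arguments. Unset Strict Implicit. Unset Printing Implicit Defensive.

Definition simple_graph (T : finType) (e : rel T) : Prop :=
  irreflexive e /\ symmetric e.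

Definition deg (T : finType) (e : rel T) (x : T) : nat := #|[set y | e x y]|.

(* d = (d_1,...,d_n) given as a seq of length n; vertex i : 'I_n carries d_{i+1}. *)
Definition degree_sequence (n : nat) (d : seq nat) : Prop :=
  [/\ size d = n,
      all (fun k => (1 <= k <= n - 1)) d,
      ~~ odd (sumn d) &
      sorted geq d].

Definition realization (n : nat) (d : seq nat) (e : rel 'I_n) : Prop :=
  simple_graph e /\ forall i : 'I_n, deg e i = nth 0 d i.

Definition connected_graph (T : finType) (e : rel T) : Prop :=
  forall x y : T, connect e x y.

Definition is_cycle (T : finType) (e : rel T) (c : seq T) : Prop :=
  [/\ uniq c, 3 <= size c & cycle e c].

Definition cycle_edge (T : finType) (c : seq T) (x y : T) : bool :=
  ((x \in c) && (next c x == y)) || ((y \in c) && (next c y == x)).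

(* Two cycles are the same subgraph iff they have the same edge set. *)
Definition same_cycle (T : finType) (c1 c2 : seq T) : Prop :=
  forall x y, cycle_edge c1 x y = cycle_edge c2 x y.

Definition cactus (T : finType) (e : rel T) : Prop :=
  connected_graph e /\
  forall x y c1 c2, e x y -> is_cycle e c1 -> is_cycle e c2 ->
    cycle_edge c1 x y -> cycle_edge c2 x y -> same_cycle c1 c2.

Definition remove_edge (T : finType) (e : rel T) (x y : T) : rel T :=
  fun a b => e a b && ~~ (((a == x) && (b == y)) || ((a == y) && (b == x))).

Definition bridgeless (T : finType) (e : rel T) : Prop :=
  forall x y, e x y -> connected_graph (remove_edge e x y).

(* In a bridgeless graph every edge lies on a cycle, which in a
   cactus is unique; so the cycles through a vertex pair up its edges, and all
   degrees are even.  For the edge bound fix a BFS tree rooted at r.  On the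
   fundamental cycle of a non-tree arc (a, b) pick a non-root vertex whose
   parent edge lies on that cycle, differently for (a, b) and (b, a).  A tree
   edge lies on only one cycle, which contains only one non-tree edge, so this
   choice is injective: the 2m arcs are at most 2(n - 1) tree arcs plus n - 1
   non-tree arcs.  Write d_v = 2 f_v and j = m - n = sum_v (f_v - 1).  When
   2j + 3 <= n, i.e. 2m <= 3(n - 1), glue j triangles onto one cycle, each
   attached at a vertex s with f_s > 1 and using two new vertices with f = 1,
   so that v lies on exactly f_v cycles.  Adding cycles one at a time, each
   meeting the previous ones in a single vertex, always gives a bridgeless
   cactus. *)

From mathcomp Require Import all_boot zify.
Set Implicit Arguments. Unset Strict Implicit. Unset Printing Implicit Defensive.

Section CycleSeq.
Variable T : eqType.
Implicit Types (c : seq T) (P : pred T) (x y : T).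

Lemma next_cons_nth c x j : uniq (x :: c) -> j < size c ->
  next (x :: c) (nth x (x :: c) j) = nth x c j.
Proof.
move=> Uc jlt; have jlt' : j < size (x :: c) by rewrite /= ltnS ltnW.
by rewrite next_nth mem_nth // index_uniq.
Qed.

Lemma next_exit c P x y : uniq c -> x \in c -> P x -> y \in c -> ~~ P y ->
  exists2 v, v \in c & P v && ~~ P (next c v).
Proof.
move=> Uc xc Px yc nPy; have [i c' Dc] := rot_to xc.
have Uc' : uniq (x :: c') by rewrite -Dc rot_uniq.
apply/hasP; apply/negPn/negP => /hasPn noexit.
have Pnext v : v \in x :: c' -> P v -> P (next (x :: c') v).
  rewrite -Dc mem_rot (next_rot i Uc) => vc Pv.
  by have := noexit v vc; rewrite Pv /= negbK.
have Pall j : j < size (x :: c') -> P (nth x (x :: c') j).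
  elim: j => [|j IH] jlt //=.
  rewrite -(next_cons_nth Uc') //; apply: Pnext; first by rewrite mem_nth // ltnW.
  by apply: IH; rewrite ltnW.
have yc' : y \in x :: c' by rewrite -Dc mem_rot.
by move: nPy; rewrite -(nth_index x yc') Pall // index_mem.
Qed.

Lemma next_exit_neq c P x y w : uniq c -> x \in c -> y \in c -> P x != P y ->
  exists2 u, u \in c & (u != w) && (P u != P (next c u)).
Proof.
move=> Uc.
have exits a b : a \in c -> b \in c -> P a -> ~~ P b ->
    exists2 u, u \in c & (u != w) && (P u != P (next c u)).
  move=> ac bc Pa nPb.
  have [u1 u1c /andP[Pu1 /negbTE nPn1]] := next_exit Uc ac Pa bc nPb.
  have [u2 u2c /andP[/negbTE nPu2 Pn2]] :=
    next_exit (P := predC P) Uc bc nPb ac (introT negPn Pa).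
  have [u1w | u1w] := eqVneq u1 w; last by exists u1; rewrite // u1w Pu1 nPn1.
  exists u2 => //; rewrite /= nPu2 (negbNE Pn2) andbT.
  by apply: contraFneq nPu2 => ->; rewrite -u1w.
move=> xc yc; case Px: (P x) => [|] Py.
  by apply: exits xc yc Px _; apply: contra Py => ->.
by apply: exits yc xc _ (negbT Px); apply: contraNT Py => /negbTE ->.
Qed.

Lemma next_neq_next2 c x : uniq c -> 3 <= size c -> x \in c ->
  (next c x != x) && (next c (next c x) != x).
Proof.
move=> Uc sc xc; have [i c' Dc] := rot_to xc.
have Uc' : uniq (x :: c') by rewrite -Dc rot_uniq.
have sc' : 3 <= size (x :: c') by rewrite -Dc size_rot.
rewrite -!(next_rot i Uc) Dc.
case: c' {Dc} Uc' sc' => [|y [|z r]] // Uc' _.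
move: Uc'; rewrite /= !inE !negb_or => /and3P[/andP[xy /andP[xz _]] /andP[yz _] _].
by rewrite /= !eqxx (eq_sym y) (negbTE xy) eq_sym.
Qed.

Lemma next_neq c x : uniq c -> 3 <= size c -> x \in c -> next c x != x.
Proof. by move=> Uc sc xc; case/andP: (next_neq_next2 Uc sc xc). Qed.

Lemma next_prev_neq c x : uniq c -> 3 <= size c -> x \in c -> next c x != prev c x.
Proof.
move=> Uc sc xc; apply/eqP => E.
by case/andP: (next_neq_next2 Uc sc xc) => _; rewrite E next_prev ?eqxx.
Qed.

Lemma next_last x p : uniq (x :: p) -> next (x :: p) (last x p) = x.
Proof.
move=> Up; rewrite next_nth mem_last.
have -> : index (last x p) (x :: p) = size p by rewrite (last_nth x) index_uniq.
by rewrite nth_default.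
Qed.

End CycleSeq.

Section CycleEdge.
Variable T : finType.
Implicit Types (c C : seq T) (x y : T).

Definition proper_cycle c := uniq c && (3 <= size c).

Lemma cycle_edge_sym c x y : cycle_edge c x y = cycle_edge c y x.
Proof. by rewrite /cycle_edge orbC. Qed.

Lemma cycle_edgeE c x y : uniq c ->
  cycle_edge c x y = (x \in c) && ((y == next c x) || (y == prev c x)).
Proof.
move=> Uc; rewrite /cycle_edge; apply/idP/idP.
  case/orP => /andP[xc /eqP <-]; first by rewrite xc eqxx.
  by rewrite mem_next xc prev_next // eqxx orbT.
case/andP => xc /orP[/eqP ->|/eqP ->]; first by rewrite xc eqxx.
by rewrite mem_prev xc next_prev // eqxx orbT.
Qed.

Lemma cycle_edge_mem c x y : cycle_edge c x y -> (x \in c) && (y \in c).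
Proof. by case/orP => /andP[xc /eqP <-]; rewrite mem_next xc. Qed.

Lemma cycle_edge_next c x : x \in c -> cycle_edge c x (next c x).
Proof. by move=> xc; rewrite /cycle_edge xc eqxx. Qed.

Lemma proper_cycle_irr c x : proper_cycle c -> ~~ cycle_edge c x x.
Proof.
case/andP=> Uc Sc; apply/negP; rewrite /cycle_edge orbb => /andP[xc /eqP E].
by move: (next_neq Uc Sc xc); rewrite E eqxx.
Qed.

Lemma cycle_cycle_edge c : uniq c -> cycle (cycle_edge c) c.
Proof. by move=> Uc; apply: cycle_from_next => // x; apply: cycle_edge_next. Qed.

Lemma card_cycle_edge c x : proper_cycle c ->
  #|[set y | cycle_edge c x y]| = 2 * (x \in c).
Proof.
case/andP=> Uc Sc; case xc: (x \in c).
  have -> : [set y | cycle_edge c x y] = [set next c x; prev c x].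
    by apply/setP => y; rewrite !inE cycle_edgeE // xc.
  by rewrite cards2 next_prev_neq.
apply/eqP; rewrite cards_eq0; apply/eqP/setP => y; rewrite !inE.
by apply/negP => /cycle_edge_mem; rewrite xc.
Qed.

Lemma cycle_edge_sub_from_next c C : uniq c ->
    (forall x, x \in c -> cycle_edge C x (next c x)) ->
  forall x y, cycle_edge c x y -> cycle_edge C x y.
Proof.
move=> Uc sub x y /orP[]/andP[xc /eqP <-]; first exact: sub.
by rewrite cycle_edge_sym; apply: sub.
Qed.

Lemma is_cycle_edge (e : rel T) c x y : symmetric e -> is_cycle e c ->
  cycle_edge c x y -> e x y.
Proof.
move=> se [_ _ cy] /orP[]/andP[xc /eqP <-]; first exact: next_cycle.
by rewrite se; apply: next_cycle.
Qed.

Lemma cycle_connect (e : rel T) c x y : symmetric e -> cycle e c ->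
  x \in c -> y \in c -> connect e x y.
Proof.
move=> se; case: c => // z p; rewrite /= rcons_path => /andP[zp _].
have conn w : w \in z :: p -> connect e z w by apply: path_connect.
move=> /conn zx /conn zy; apply: connect_trans zy.
by rewrite (sym_connect_sym se).
Qed.

Section SubCycle.
Variables c C : seq T.
Hypotheses (c_proper : proper_cycle c) (C_proper : proper_cycle C).
Hypothesis sub : forall x y, cycle_edge c x y -> cycle_edge C x y.

Lemma sub_cycle_edge_at x y : x \in c -> cycle_edge c x y = cycle_edge C x y.
Proof.
move=> xc; have xC : x \in C by have /cycle_edge_mem/andP[] := sub (cycle_edge_next xc).
have /eqP nbrE : [set y | cycle_edge c x y] == [set y | cycle_edge C x y].
  rewrite eqEcard !card_cycle_edge // xc xC leqnn andbT.
  by apply/subsetP => z; rewrite !inE; apply: sub.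
by move/setP/(_ y): nbrE; rewrite !inE.
Qed.

Lemma sub_cycle_mem x : (x \in c) = (x \in C).
Proof.
have [Uc Sc] := andP c_proper; have [UC _] := andP C_proper.
have cC z : z \in c -> z \in C.
  by move=> zc; have /cycle_edge_mem/andP[] := sub (cycle_edge_next zc).
apply/idP/idP => [/cC //|xC]; apply/negPn/negP => xc.
have c0 : nth x c 0 \in c by rewrite mem_nth // (leq_trans _ Sc).
have [w wC /andP[wc nwc]] := next_exit (P := mem c) UC (cC _ c0) c0 xC xc.
have := cycle_edge_next wC; rewrite -sub_cycle_edge_at // => /cycle_edge_mem/andP[_].
by apply/negP.
Qed.

Lemma sub_cycle_same : same_cycle c C.
Proof.
move=> x y; case xc: (x \in c); first exact: sub_cycle_edge_at.
by apply/idP/idP => /cycle_edge_mem/andP[]; rewrite -?sub_cycle_mem xc.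
Qed.

End SubCycle.

End CycleEdge.

Section Glued.
Variable T : finType.
Implicit Types (c C : seq T) (Cs : seq (seq T)) (x y : T).

Definition cycles_rel Cs : rel T := fun x y => has (fun C => cycle_edge C x y) Cs.

Definition covered Cs x := has (fun C => x \in C) Cs.

Fixpoint glued Cs : Prop :=
  if Cs is C :: Cs' then
    [/\ glued Cs', proper_cycle C &
        Cs' = [::] \/ exists s, [/\ s \in C, covered Cs' s &
                                   forall w, w \in C -> covered Cs' w -> w = s]]
  else True.

Lemma cycles_rel_sym Cs : symmetric (cycles_rel Cs).
Proof. by move=> x y; apply: eq_has => C; rewrite cycle_edge_sym. Qed.

Lemma cycles_rel_covered Cs x y : cycles_rel Cs x y -> covered Cs x && covered Cs y.
Proof.
case/hasP=> C CCs /cycle_edge_mem/andP[xC yC].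
by apply/andP; split; apply/hasP; exists C.
Qed.

Lemma cycles_rel_cons C Cs x y :
  cycles_rel (C :: Cs) x y = cycle_edge C x y || cycles_rel Cs x y.
Proof. by []. Qed.

Lemma glued_proper Cs C : glued Cs -> C \in Cs -> proper_cycle C.
Proof.
elim: Cs => [|C' Cs IH] //= [gCs okC' _]; rewrite inE => /orP[/eqP-> //|]; exact: IH.
Qed.

Section Attached.
Variables (C : seq T) (Cs : seq (seq T)) (s : T).
Hypothesis attach : forall w, w \in C -> covered Cs w -> w = s.
Hypothesis C_proper : proper_cycle C.

Local Notation G := (cycles_rel (C :: Cs)).

Lemma attached_edge_uncovered u z : G u z -> ~~ covered Cs u -> cycle_edge C u z.
Proof.
by rewrite cycles_rel_cons => /orP[// | /cycles_rel_covered/andP[->]].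
Qed.

Lemma attached_no_chord x y : cycle_edge C x y -> covered Cs x -> covered Cs y -> False.
Proof.
move=> xy xcov ycov; have /andP[xC yC] := cycle_edge_mem xy.
by move: (proper_cycle_irr x C_proper); rewrite {2}(attach xC xcov) -(attach yC ycov) xy.
Qed.

Lemma attached_cycle_meet c v u : uniq c -> cycle G c ->
  v \in c -> ~~ covered Cs v -> u \in c -> covered Cs u -> u = s.
Proof.
move=> Uc cyc vc vunc uc ucov; apply/eqP/negPn/negP => us.
pose Q z := covered Cs z && (z != s).
have [w wc /andP[/andP[wcov ws] nQw]] :
    exists2 w, w \in c & Q w && ~~ Q (next c w).
  by apply: next_exit uc _ vc _; rewrite /Q ?ucov ?us ?(negbTE vunc).
case nwcov: (covered Cs (next c w)); last first.
  have /attached_edge_uncovered : G (next c w) w by rewrite cycles_rel_sym next_cycle.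
  case/(_ (negbT nwcov))/cycle_edge_mem/andP => _ wC.
  by move: ws; rewrite (attach wC wcov) eqxx.
have nw_s : next c w = s by apply/eqP; move: nQw; rewrite /Q nwcov negbK.
have [v' v'c /andP[v'unc nv'cov]] :
    exists2 v', v' \in c & ~~ covered Cs v' && ~~ ~~ covered Cs (next c v').
  by apply: (next_exit Uc vc vunc uc); rewrite negbK.
have /attached_edge_uncovered/(_ v'unc)/cycle_edge_mem/andP[_ nv'C] :=
  next_cycle cyc v'c.
have nv'_s := attach nv'C (negbNE nv'cov).
have wv' : w = v' by rewrite -(prev_next Uc w) -(prev_next Uc v') nw_s nv'_s.
by move: v'unc; rewrite -wv' wcov.
Qed.

Lemma attached_cycle_sub c v : uniq c -> 3 <= size c -> cycle G c ->
    v \in c -> ~~ covered Cs v ->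
  forall x y, cycle_edge c x y -> cycle_edge C x y.
Proof.
move=> Uc Sc cyc vc vunc; apply: cycle_edge_sub_from_next => // u uc.
have Gu := next_cycle cyc uc.
case ucov: (covered Cs u); last exact: attached_edge_uncovered (negbT ucov).
have nuc : next c u \in c by rewrite mem_next.
case nucov: (covered Cs (next c u)).
  have := next_neq Uc Sc uc.
  by rewrite (attached_cycle_meet Uc cyc vc vunc nuc nucov)
             (attached_cycle_meet Uc cyc vc vunc uc ucov) eqxx.
by rewrite cycle_edge_sym; apply: attached_edge_uncovered (negbT nucov);
   rewrite cycles_rel_sym.
Qed.

Lemma attached_cycle_in_covered c : cycle G c -> {in c, forall u, covered Cs u} ->
  cycle (cycles_rel Cs) c.
Proof.
move=> cyc cov; apply: (@sub_in_cycle _ (covered Cs)) cyc; last exact/allP.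
move=> x y xcov ycov; rewrite cycles_rel_cons => /orP[xy | //].
by case: (attached_no_chord xy xcov ycov).
Qed.

End Attached.

Lemma glued_cycle_sub Cs c : glued Cs -> uniq c -> 3 <= size c ->
    cycle (cycles_rel Cs) c ->
  exists2 C, C \in Cs & forall x y, cycle_edge c x y -> cycle_edge C x y.
Proof.
elim: Cs c => [|C Cs IH] c.
  by case: c => // x p _ _ _ /(next_cycle)/(_ (mem_head x p)).
move=> [gCs C_proper attach] Uc Sc cyc.
case: attach => [Cs0 | [s [sC scov attach]]].
  exists C; rewrite ?mem_head // {}Cs0 in cyc *.
  by apply: cycle_edge_sub_from_next => // x xc; move: (next_cycle cyc xc); rewrite /= orbF.
have [[v vc vunc] | /hasPn allcov] := altP (@hasP _ (fun v => ~~ covered Cs v) c).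
  exists C; first exact: mem_head.
  by move=> x y; apply: (attached_cycle_sub attach Uc Sc cyc vc vunc).
have [C' C'Cs sub] : exists2 C', C' \in Cs &
    forall x y, cycle_edge c x y -> cycle_edge C' x y.
  apply: IH => //; apply: (attached_cycle_in_covered attach C_proper cyc) => u.
  by move/allcov/negbNE.
by exists C'; rewrite // inE C'Cs orbT.
Qed.

Lemma glued_same_cycle Cs C1 C2 x y : glued Cs -> C1 \in Cs -> C2 \in Cs ->
  cycle_edge C1 x y -> cycle_edge C2 x y -> same_cycle C1 C2.
Proof.
elim: Cs => [|C Cs IH] //= [gCs C_proper attach].
have cross C' : C' \in Cs -> cycle_edge C x y -> cycle_edge C' x y -> False.
  case: attach => [-> // | [s [_ _ attach]]] C'Cs xyC xyC'.
  have /andP[xC' yC'] := cycle_edge_mem xyC'.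
  by apply: (attached_no_chord attach C_proper xyC); apply/hasP; exists C'.
rewrite !inE => /orP[/eqP-> | C1Cs] /orP[/eqP-> | C2Cs] xy1 xy2 //.
- by case: (cross _ C2Cs xy1 xy2).
- by case: (cross _ C1Cs xy2 xy1).
- exact: IH.
Qed.

Lemma glued_connect Cs x y : glued Cs -> covered Cs x -> covered Cs y ->
  connect (cycles_rel Cs) x y.
Proof.
elim: Cs x y => [|C Cs IH] x y //= [gCs C_proper attach].
have inC u w : u \in C -> w \in C -> connect (cycles_rel (C :: Cs)) u w.
  move=> uC wC; apply: (connect_sub (e := cycle_edge C)).
    by move=> a b ab; apply: connect1; rewrite cycles_rel_cons ab.
  apply: cycle_connect uC wC; first by move=> a b; rewrite cycle_edge_sym.
  by apply: cycle_cycle_edge; case/andP: C_proper.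
have inCs u w : covered Cs u -> covered Cs w -> connect (cycles_rel (C :: Cs)) u w.
  move=> ucov wcov; apply: (connect_sub (e := cycles_rel Cs)); last exact: IH.
  by move=> a b ab; apply: connect1; rewrite cycles_rel_cons ab orbT.
rewrite /covered /= => /orP[xC | xcov] /orP[yC | ycov]; first exact: inC.
- case: attach => [Cs0 | [s [sC scov _]]]; first by rewrite Cs0 in ycov.
  exact: connect_trans (inC _ _ xC sC) (inCs _ _ scov ycov).
- case: attach => [Cs0 | [s [sC scov _]]]; first by rewrite Cs0 in xcov.
  exact: connect_trans (inCs _ _ xcov scov) (inC _ _ sC yC).
- exact: inCs.
Qed.

Lemma glued_deg Cs v : glued Cs ->
  deg (cycles_rel Cs) v = 2 * count (fun C => v \in C) Cs.
Proof.
rewrite /deg; elim: Cs => [_ | C Cs IH [gCs C_proper attach]] /=.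
  by apply/eqP; rewrite cards_eq0; apply/eqP/setP => y; rewrite !inE.
have -> : [set y | cycles_rel (C :: Cs) v y] =
          [set y | cycle_edge C v y] :|: [set y | cycles_rel Cs v y].
  by apply/setP => y; rewrite !inE.
rewrite cardsU IH // card_cycle_edge // mulnDr.
suff -> : [set y | cycle_edge C v y] :&: [set y | cycles_rel Cs v y] = set0.
  by rewrite cards0 subn0.
apply/setP => y; rewrite !inE; apply/negP => /andP[vyC /cycles_rel_covered/andP[vcov ycov]].
case: attach => [Cs0 | [s [_ _ attach]]]; first by rewrite Cs0 in vcov.
exact: (attached_no_chord attach C_proper vyC vcov ycov).
Qed.

End Glued.

Section Bridgeless.
Variables (T : finType) (e : rel T).
Implicit Types (c : seq T) (x y : T).

Lemma remove_edge_sub x y : subrel (remove_edge e x y) e.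
Proof. by move=> a b /andP[]. Qed.

Lemma remove_edgeC x y : remove_edge e x y =2 remove_edge e y x.
Proof. by move=> a b; rewrite /remove_edge orbC. Qed.

Lemma remove_edge_sym x y : symmetric e -> symmetric (remove_edge e x y).
Proof.
move=> se a b; rewrite /remove_edge se; congr (_ && ~~ _).
by rewrite orbC; congr (_ || _); rewrite andbC.
Qed.

Lemma remove_edgeE x y a b : ~~ [|| (a == x) && (b == y) | (a == y) && (b == x)] ->
  remove_edge e x y a b = e a b.
Proof. by rewrite /remove_edge => ->; rewrite andbT. Qed.

Lemma cycle_remove_edge_connect c a : is_cycle e c -> a \in c ->
  connect (remove_edge e a (next c a)) (next c a) a.
Proof.
move=> [Uc Sc cyc] ac; set b := next c a; set e' := remove_edge e a b.
apply/negPn/negP => nba.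
have bc : b \in c by rewrite mem_next.
have [v vc /andP[bv nbnv]] := next_exit (P := connect e' b) Uc bc (connect0 _ _) ac nba.
have va : v != a by apply: contraNneq nba => <-.
suff : e' v (next c v) by move/connect1/(connect_trans bv); rewrite (negbTE nbnv).
rewrite /e' remove_edgeE ?(next_cycle cyc vc) // (negbTE va) /= negb_and.
case: (v =P b) => [vb | _] //=; rewrite vb.
by case/andP: (next_neq_next2 Uc Sc ac).
Qed.

Lemma bridgeless_of_cycles : symmetric e -> connected_graph e ->
    (forall x y, e x y -> exists c, is_cycle e c /\ cycle_edge c x y) ->
  bridgeless e.
Proof.
move=> se conn on_cycle x y exy.
have se' := remove_edge_sym x y se.
have cxy : connect (remove_edge e x y) x y.
  have [c [cyc /orP[]/andP[xc /eqP nx]]] := on_cycle x y exy.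
    by rewrite (sym_connect_sym se') -nx; apply: cycle_remove_edge_connect.
  by rewrite (eq_connect (remove_edgeC x y)) -nx; apply: cycle_remove_edge_connect.
move=> a b; apply: (connect_sub (e := e)) (conn a b) => u w euw.
have [/orP[]/andP[/eqP-> /eqP->] // | rem] :=
  boolP [|| (u == x) && (w == y) | (u == y) && (w == x)].
  by rewrite (sym_connect_sym se').
by apply: connect1; rewrite remove_edgeE.
Qed.

End Bridgeless.

Lemma glued_bridgeless_cactus (T : finType) (Cs : seq (seq T)) :
    glued Cs -> (forall v, covered Cs v) ->
  [/\ simple_graph (cycles_rel Cs), cactus (cycles_rel Cs) & bridgeless (cycles_rel Cs)].
Proof.
move=> gCs cov; have sym := @cycles_rel_sym T Cs.
have Cs_cycle C : C \in Cs -> is_cycle (cycles_rel Cs) C.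
  move=> CCs; have /andP[UC SC] := glued_proper gCs CCs; split=> //.
  by apply: cycle_from_next => // v vC; apply/hasP; exists C => //; apply: cycle_edge_next.
have conn : connected_graph (cycles_rel Cs) by move=> x y; apply: glued_connect.
split.
- split=> // x; apply/negP => /hasP[C CCs].
  by apply/negP; apply: proper_cycle_irr (glued_proper gCs CCs).
- split=> // x y c1 c2 _ [U1 S1 cyc1] [U2 S2 cyc2] xy1 xy2.
  have [C1 C1Cs sub1] := glued_cycle_sub gCs U1 S1 cyc1.
  have [C2 C2Cs sub2] := glued_cycle_sub gCs U2 S2 cyc2.
  have E1 := sub_cycle_same (introT andP (conj U1 S1)) (glued_proper gCs C1Cs) sub1.
  have E2 := sub_cycle_same (introT andP (conj U2 S2)) (glued_proper gCs C2Cs) sub2.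
  have E12 := glued_same_cycle gCs C1Cs C2Cs (sub1 _ _ xy1) (sub2 _ _ xy2).
  by move=> u w; rewrite E1 E2 E12.
- apply: bridgeless_of_cycles => // x y /hasP[C CCs xy].
  by exists C; split => //; apply: Cs_cycle.
Qed.

Section Construction.
Variable T : finType.
Implicit Types (Cs : seq (seq T)) (U : {set T}) (f : T -> nat).

Lemma covered_count Cs v : covered Cs v = (0 < count (fun C => v \in C) Cs).
Proof. exact: has_count. Qed.

Lemma glued_cons_triangle Cs s x y : glued Cs -> covered Cs s ->
  ~~ covered Cs x -> ~~ covered Cs y -> x != y -> glued ([:: s; x; y] :: Cs).
Proof.
move=> gCs scov xunc yunc xy.
have sx : s != x by apply: contraNneq xunc => <-.
have sy : s != y by apply: contraNneq yunc => <-.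
split=> //; first by rewrite /proper_cycle /= !inE !negb_or sx sy xy.
right; exists s; split=> //; first exact: mem_head.
by move=> w; rewrite !inE => /or3P[]/eqP-> // wcov;
  [move: xunc | move: yunc]; rewrite wcov.
Qed.

Lemma card_excess_le U f : {in U, forall v, 0 < f v} ->
  #|[set v in U | f v != 1]| <= \sum_(v in U) (f v - 1).
Proof.
move=> fpos; rewrite (bigID (fun v => f v == 1)) /= -sum1_card.
apply: leq_trans (leq_addl _ _).
rewrite (eq_bigl (fun v => (v \in U) && (f v != 1))) => [|v]; last by rewrite inE.
by apply: leq_sum => v /andP[/fpos fv /eqP fv1]; lia.
Qed.

Lemma exists_excess U f : 0 < \sum_(v in U) (f v - 1) -> exists2 s, s \in U & 1 < f s.
Proof.
move=> sum_pos; apply/exists_inP; apply: contraTT sum_pos => /exists_inPn none.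
rewrite -leqNgt leqn0 sum_nat_eq0; apply/forall_inP => v /none.
by rewrite -leqNgt subn_eq0.
Qed.

Lemma exists_two_ones U f : {in U, forall v, 0 < f v} ->
    \sum_(v in U) (f v - 1) + 1 < #|U| ->
  exists x y, [/\ x \in U, y \in U, x != y, f x = 1 & f y = 1].
Proof.
move=> fpos small.
have : 1 < #|[set v in U | f v == 1]|.
  have := cardsID [set v | f v == 1] U; have := card_excess_le fpos.
  have -> : U :&: [set v | f v == 1] = [set v in U | f v == 1].
    by apply/setP => v; rewrite !inE.
  have -> : U :\: [set v | f v == 1] = [set v in U | f v != 1].
    by apply/setP => v; rewrite !inE andbC.
  lia.
case/card_gt1P => x [y []]; rewrite !inE => /andP[xU /eqP fx] /andP[yU /eqP fy] xy.
by exists x, y.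
Qed.

Lemma glued_multiplicities_triangle U f s x y :
    {in U, forall v, 0 < f v} -> 1 < f s -> f x = 1 -> f y = 1 ->
    s \in U -> x \in U -> y \in U -> x != y ->
    (exists2 Cs, glued Cs & forall v, count (fun C => v \in C) Cs =
       if v \in U :\ x :\ y then f v - (v == s) else 0) ->
  exists2 Cs, glued Cs &
    forall v, count (fun C => v \in C) Cs = if v \in U then f v else 0.
Proof.
move=> fpos fs fx fy sU xU yU xy [Cs gCs countCs].
have [sx sy] : s != x /\ s != y by split; apply: contraTneq fs => ->; rewrite ?fx ?fy.
have covCs v : covered Cs v = (v \in U :\ x :\ y).
  rewrite covered_count countCs; case: ifP => // vU'; move: vU'.
  by rewrite !inE => /and3P[_ _ /fpos]; case: (v =P s) => [->|]; lia.
exists ([:: s; x; y] :: Cs).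
  by apply: glued_cons_triangle gCs _ _ _ xy; rewrite covCs // !inE ?eqxx ?andbF ?sU ?sx ?sy.
move=> v /=; rewrite countCs !inE.
case: (v =P s) => [->|vs]; first by rewrite sU sx sy /=; lia.
case: (v =P x) => [->|vx]; first by rewrite xU fx andbF.
by case: (v =P y) => [->|vy]; rewrite ?yU ?fy //= subn0.
Qed.

Lemma glued_of_multiplicities j U f : {in U, forall v, 0 < f v} ->
    2 * j + 3 <= #|U| -> \sum_(v in U) (f v - 1) = j ->
  exists2 Cs, glued Cs &
    forall v, count (fun C => v \in C) Cs = if v \in U then f v else 0.
Proof.
elim: j U f => [|j IH] U f fpos cardU sumU.
  have f1 v : v \in U -> f v = 1.
    move=> vU; move/eqP: sumU; rewrite sum_nat_eq0 => /forall_inP/(_ v vU).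
    by have := fpos v vU; rewrite subn_eq0; lia.
  exists [:: enum U]; first by split=> //; [rewrite /proper_cycle enum_uniq -cardE | left].
  by move=> v /=; rewrite mem_enum addn0; case: ifP => // /f1 ->.
have [s sU fs] : exists2 s, s \in U & 1 < f s by apply: exists_excess; rewrite sumU.
have [x [y [xU yU xy fx fy]]] : exists x y, [/\ x \in U, y \in U, x != y, f x = 1 & f y = 1].
  by apply: exists_two_ones fpos _; rewrite sumU; lia.
apply: (glued_multiplicities_triangle fpos fs fx fy sU xU yU xy).
have [sx sy] : s != x /\ s != y by split; apply: contraTneq fs => ->; rewrite ?fx ?fy.
pose U' := U :\ x :\ y; pose f' v := f v - (v == s).
have sU' : s \in U' by rewrite !inE sU sx sy.
have yUx : y \in U :\ x by rewrite !inE yU eq_sym xy.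
have cardU' : #|U| = #|U'| + 2.
  by rewrite /U' (cardsD1 x U) xU (cardsD1 y (U :\ x)) yUx; lia.
have sumU' : \sum_(v in U') (f' v - 1) = j.
  have fixed : \sum_(v in U' :\ s) (f' v - 1) = \sum_(v in U' :\ s) (f v - 1).
    by apply: eq_bigr => v; rewrite !inE /f' => /andP[/negbTE -> _]; rewrite subn0.
  move: sumU; rewrite (big_setD1 x xU) (big_setD1 y yUx) fx fy /= -/U'.
  by rewrite !(big_setD1 s sU') fixed /f' eqxx /=; lia.
apply: IH sumU'; last by lia.
by move=> v; rewrite !inE /f' => /and3P[_ _ /fpos]; case: (v =P s) => [->|]; lia.
Qed.

End Construction.

Section EvenDegree.
Variable T : finType.
Implicit Types (c : seq T) (x y : T).

Lemma path_close_cycle (e r : rel T) x y p : subrel r e -> e x y ->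
    path r y p -> last y p = x -> ~~ r y x -> x != y ->
  exists c, [/\ is_cycle e c, cycle_edge c x y &
    forall u, u \in c -> r u (next c u) || ((u == x) && (next c u == y))].
Proof.
move=> sub exy pth lst nryx xy; move: exy nryx xy; rewrite -lst.
case: (shortenP pth) => p' pth' Up' _ exy nryx xy.
have Sp' : 2 <= size p'.
  case: p' pth' Up' exy nryx xy => [|z [|w l]] //=; first by rewrite eqxx.
  by rewrite andbT => ->.
pose r' u w := r u w || ((u == last y p') && (w == y)).
have cyc' : cycle r' (y :: p').
  rewrite /= rcons_path /r' !eqxx orbT andbT.
  by apply: sub_path pth' => u w ->.
exists (y :: p'); split => //.
- split=> //; rewrite /= rcons_path (sub_path sub pth') /=.
  by move: exy; rewrite -(next_last Up').
- by rewrite /cycle_edge mem_last next_last // eqxx.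
- by move=> u uc; apply: next_cycle cyc' uc.
Qed.

Lemma bridgeless_edge_on_cycle (e : rel T) x y : simple_graph e -> bridgeless e ->
  e x y -> exists c, is_cycle e c /\ cycle_edge c x y.
Proof.
move=> [irr se] br exy; have /connectP[p pth lst] := br x y exy y x.
have xy : x != y by apply: contraTneq exy => ->; rewrite irr.
have nryx : ~~ remove_edge e x y y x by rewrite /remove_edge !eqxx orbT andbF.
have [c [cyc xyc _]] := path_close_cycle (@remove_edge_sub _ e x y) exy pth (esym lst) nryx xy.
by exists c.
Qed.

Lemma pairing_card_even (R : T -> T -> Prop) (A : {set T}) :
    (forall y z, R y z -> R z y) ->
    (forall y, y \in A -> exists z, [/\ z \in A, z != y & R y z]) ->
    (forall y z z', y \in A -> z \in A -> z' \in A -> z != y -> z' != y ->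
       R y z -> R y z' -> z = z') ->
  ~~ odd #|A|.
Proof.
move=> Rsym; have [N] := ubnP #|A|; elim: N A => [//|N IH] A cardA partner uniq_partner.
have [-> | [y yA]] := set_0Vmem A; first by rewrite cards0.
have [z [zA zy Ryz]] := partner y yA.
pose A' := A :\ y :\ z.
have zAy : z \in A :\ y by rewrite !inE zy.
have cardA' : #|A| = #|A'| + 2.
  by rewrite /A' (cardsD1 y A) yA (cardsD1 z (A :\ y)) zAy; lia.
have A'A w : w \in A' -> w \in A by rewrite !inE => /and3P[].
rewrite cardA' addn2 /= negbK; apply: IH; first by lia.
- move=> w wA'; have wA := A'A w wA'.
  have [w' [w'A w'w Rww']] := partner w wA.
  exists w'; split=> //; move: wA'; rewrite !inE w'A andbT => /and3P[wz wy _].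
  apply/andP; split; apply/eqP => E; subst w'.
    have yz : y != z by rewrite eq_sym.
    have := uniq_partner z w y zA wA yA wz yz (Rsym _ _ Rww') (Rsym _ _ Ryz).
    by move/eqP; rewrite (negbTE wy).
  have := uniq_partner y w z yA wA zA wy zy (Rsym _ _ Rww') Ryz.
  by move/eqP; rewrite (negbTE wz).
- by move=> w a b /A'A wA /A'A aA /A'A bA; apply: uniq_partner.
Qed.

Lemma cactus_deg_even (e : rel T) v : simple_graph e -> cactus e -> bridgeless e ->
  ~~ odd (deg e v).
Proof.
move=> sg [_ cac] br; have [irr se] := sg.
pose R y z := exists c, [/\ is_cycle e c, cycle_edge c v y & cycle_edge c v z].
apply: (@pairing_card_even R) => [y z [c [? ? ?]] | y | y z z'].
- by exists c.
- rewrite inE => evy; have [c [cyc vyc]] := bridgeless_edge_on_cycle sg br evy.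
  have [Uc Sc _] := cyc; move: (vyc); rewrite cycle_edgeE // => /andP[vc yv].
  pose z := if y == next c v then prev c v else next c v.
  have vzc : cycle_edge c v z.
    by rewrite cycle_edgeE // vc /z; case: (y == next c v); rewrite eqxx ?orbT.
  exists z; split; last by exists c.
  + by rewrite inE; apply: is_cycle_edge vzc.
  + rewrite /z; case: (y =P next c v) => [->|ny]; first by rewrite eq_sym next_prev_neq.
    by move: yv; rewrite (introF eqP ny) /= => /eqP ->; rewrite next_prev_neq.
- rewrite !inE => evy _ _ zy z'y [c1 [cyc1 vy1 vz1]] [c2 [cyc2 vy2 vz2]].
  move: vz2; rewrite -(cac _ _ _ _ evy cyc1 cyc2 vy1 vy2).
  have [U1 _ _] := cyc1; move: vy1 vz1; rewrite !cycle_edgeE //.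
  move=> /andP[_ y12] /andP[_ z12] /andP[_ z'12]; move: zy z'y.
  by case/orP: y12 => /eqP->; case/orP: z12 => /eqP->; case/orP: z'12 => /eqP->;
    rewrite ?eqxx.
Qed.

End EvenDegree.

Section SpanningTree.
Variables (T : finType) (e : rel T) (r : T).
Hypothesis conn : connected_graph e.
Implicit Types (u v w x : T).

Fixpoint ball k : {set T} :=
  if k is k'.+1 then ball k' :|: [set w | [exists u in ball k', e u w]] else [set r].

Lemma ball_path x k p : x \in ball k -> path e x p -> last x p \in ball (k + size p).
Proof.
elim: p x k => [|y p IH] x k /=; first by rewrite addn0.
move=> xk /andP[exy pth]; rewrite addnS -addSn; apply: IH pth.
by rewrite /= !inE; apply/orP; right; apply/existsP; exists x; rewrite xk.
Qed.

Lemma ball_exists v : exists k, v \in ball k.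
Proof.
have /connectP[p pth ->] := conn r v; exists (0 + size p).
by apply: ball_path pth; rewrite /= inE.
Qed.

Definition depth v := ex_minn (ball_exists v).

Lemma depth_ball v : v \in ball (depth v).
Proof. by rewrite /depth; case: ex_minnP. Qed.

Lemma depth_min v k : v \in ball k -> depth v <= k.
Proof. by rewrite /depth; case: ex_minnP => m _ min /min. Qed.

Lemma depth_root : depth r = 0.
Proof. by apply/eqP; rewrite -leqn0; apply: depth_min; rewrite /= inE. Qed.

Lemma depth_gt0 v : v != r -> 0 < depth v.
Proof.
by move=> vr; have := depth_ball v; case: (depth v) => //=; rewrite inE (negbTE vr).
Qed.

Lemma parent_exists v : v != r -> exists u, e u v && (depth u < depth v).
Proof.
move=> vr; have := depth_ball v; have := depth_gt0 vr.
case D: (depth v) => [//|k] _ /=; rewrite !inE => /orP[vk|].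
  by have := depth_min vk; rewrite D ltnn.
case/exists_inP => u uk euv; exists u; rewrite euv /=.
by have := depth_min uk; lia.
Qed.

Definition parent v :=
  if v == r then r else odflt r [pick u | e u v && (depth u < depth v)].

Lemma parent_root : parent r = r.
Proof. by rewrite /parent eqxx. Qed.

Lemma parent_edge_depth v : v != r -> e (parent v) v && (depth (parent v) < depth v).
Proof.
move=> vr; rewrite /parent (negbTE vr); case: pickP => [u // | none].
by have [u] := parent_exists vr; rewrite none.
Qed.

Lemma depth_parent_le v : depth (parent v) <= depth v.
Proof.
have [-> | vr] := eqVneq v r; first by rewrite parent_root.
by case/andP: (parent_edge_depth vr) => _ /ltnW.
Qed.

Lemma iter_parent_root j w : depth w <= j -> iter j parent w = r.
Proof.
elim: j w => [|j IH] w.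
  by rewrite leqn0 => /eqP D; apply/eqP; apply: contraLR isT => /depth_gt0; rewrite D.
move=> Dw; rewrite iterSr; apply: IH.
have [-> | wr] := eqVneq w r; first by rewrite parent_root depth_root.
by case/andP: (parent_edge_depth wr) => _; lia.
Qed.

Lemma depth_iter_le i w : depth (iter i parent w) <= depth w.
Proof. by elim: i => //= i IH; apply: leq_trans (depth_parent_le _) IH. Qed.

Definition ancestor x v := [exists i : 'I_(depth v).+1, iter i parent v == x].

Lemma ancestorP x v : reflect (exists i, iter i parent v = x) (ancestor x v).
Proof.
apply: (iffP existsP) => [[i /eqP <-] | [i <-]]; first by exists i.
have [le_i | lt_i] := leqP i (depth v); first by exists (Ordinal (le_i : i < (depth v).+1)).
by exists ord_max; rewrite /= !iter_parent_root // ltnW.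
Qed.

Lemma ancestor_refl v : ancestor v v.
Proof. by apply/ancestorP; exists 0. Qed.

Lemma root_ancestor v : ancestor r v.
Proof. by apply/ancestorP; exists (depth v); rewrite iter_parent_root. Qed.

Lemma ancestor_parent x v : v != r -> ancestor x v = (x == v) || ancestor x (parent v).
Proof.
move=> vr; apply/ancestorP/orP => [[[|i] <-] | [/eqP-> | /ancestorP[i <-]]].
- by left.
- by right; apply/ancestorP; exists i; rewrite -iterSr.
- by exists 0.
- by exists i.+1; rewrite iterSr.
Qed.

Lemma ancestor_depth x v : ancestor x v -> depth x <= depth v.
Proof. by case/ancestorP => i <-; apply: depth_iter_le. Qed.

Lemma ancestor_depth_lt x v : ancestor x v -> x != v -> depth x < depth v.
Proof.
case/ancestorP => [[|i] <-]; first by rewrite eqxx.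
have [-> | vr] := eqVneq v r; first by rewrite (iter_fix _ parent_root) eqxx.
move=> _; rewrite iterSr; case/andP: (parent_edge_depth vr) => _.
exact: leq_ltn_trans (depth_iter_le _ _).
Qed.

Lemma ancestor_root x : ancestor x r -> x = r.
Proof. by case/ancestorP => i <-; apply: iter_fix parent_root. Qed.

Hypotheses (se : symmetric e) (irr : irreflexive e).
Hypothesis cac : forall x y c1 c2, e x y -> is_cycle e c1 -> is_cycle e c2 ->
  cycle_edge c1 x y -> cycle_edge c2 x y -> same_cycle c1 c2.

Definition parent_edge u w := (u != r) && (w == parent u).
Definition tree_edge u w := parent_edge u w || parent_edge w u.

Lemma tree_edge_sym : symmetric tree_edge.
Proof. by move=> u w; rewrite /tree_edge orbC. Qed.

Lemma tree_edge_sub : subrel tree_edge e.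
Proof. by move=> u w /orP[]/andP[ur /eqP->]; case/andP: (parent_edge_depth ur); rewrite // se. Qed.

Lemma tree_connect_root v : connect tree_edge v r.
Proof.
have [N] := ubnP (depth v); elim: N v => [//|N IH] v Dv.
have [-> | vr] := eqVneq v r; first exact: connect0.
have /andP[_ Dpv] := parent_edge_depth vr.
apply: (@connect_trans _ _ (parent v)); last by apply: IH; lia.
by apply: connect1; rewrite /tree_edge /parent_edge vr eqxx.
Qed.

Lemma tree_edge_cross x u w : tree_edge u w -> ancestor x u != ancestor x w ->
  ((u == x) && (w == parent x)) || ((w == x) && (u == parent x)).
Proof.
case/orP => /andP[ur /eqP->].
  by rewrite [ancestor x u](ancestor_parent _ ur); have [-> | _] := eqVneq x u; rewrite ?eqxx.
by rewrite [ancestor x w](ancestor_parent _ ur); have [-> | _] := eqVneq x w; rewrite ?eqxx ?orbT.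
Qed.

(* For a non-tree edge (a, b): a non-root vertex whose parent edge lies on the
   fundamental cycle of (a, b), chosen differently for (b, a). *)
Definition cycle_vertex a b := if ancestor a b then parent b else a.

Lemma cycle_vertex_spec a b : e a b -> ~~ tree_edge a b ->
  [/\ cycle_vertex a b != r,
      ancestor (cycle_vertex a b) a != ancestor (cycle_vertex a b) b &
      cycle_vertex a b != cycle_vertex b a].
Proof.
move=> eab ntr; have ab : a != b by apply: contraTneq eab => ->; rewrite irr.
rewrite /cycle_vertex; case Aab: (ancestor a b); last first.
  have ar : a != r by apply: contraFneq Aab => ->; apply: root_ancestor.
  rewrite ancestor_refl Aab; split=> //; case: ifP => // _.
  by apply: contraTneq (parent_edge_depth ar) => <-; rewrite ltnn andbF.
have br : b != r by apply: contraNneq ab => br; move: Aab; rewrite br => /ancestor_root ->.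
have /andP[_ Dpb] := parent_edge_depth br.
have Aapb : ancestor a (parent b) by move: Aab; rewrite ancestor_parent // (negbTE ab).
have apb : a != parent b.
  by apply: contraNneq ntr => ->; rewrite /tree_edge /parent_edge br eqxx orbT.
have -> : ancestor b a = false.
  by apply: contraTF (ancestor_depth_lt Aab ab) => /ancestor_depth; rewrite -leqNgt.
split.
- by apply: contraNneq apb => pbr; move: Aapb; rewrite pbr => /ancestor_root ->.
- rewrite (ancestor_parent _ br) ancestor_refl orbT.
  apply: contraTneq (ancestor_depth_lt Aapb apb) => /ancestor_depth.
  by rewrite -leqNgt.
- by apply: contraTneq Dpb => ->; rewrite ltnn.
Qed.

Lemma fundamental_cycle a b : e a b -> ~~ tree_edge a b ->
  exists c, [/\ is_cycle e c, cycle_edge c b a,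
    (forall u, u \in c -> tree_edge u (next c u) || ((u == b) && (next c u == a))) &
    cycle_edge c (cycle_vertex a b) (parent (cycle_vertex a b))].
Proof.
move=> eab ntr; have ba : b != a by apply: contraTneq eab => ->; rewrite irr.
have /connectP[p pth lst] : connect tree_edge a b.
  apply: connect_trans (tree_connect_root a) _.
  by rewrite (sym_connect_sym tree_edge_sym) tree_connect_root.
have [c [cyc bac onc]] :=
  path_close_cycle tree_edge_sub (etrans (se b a) eab) pth (esym lst) ntr ba.
exists c; split => //.
have [_ cross _] := cycle_vertex_spec eab ntr.
have [Uc _ _] := cyc; have /andP[bc ac] := cycle_edge_mem bac.
have [u uc /andP[ub cross_u]] := next_exit_neq b Uc ac bc cross.
have tu : tree_edge u (next c u) by move: (onc u uc); rewrite (negbTE ub) orbF.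
case/orP: (tree_edge_cross tu cross_u) => /andP[/eqP E1 /eqP E2].
  by rewrite -E2 -E1 cycle_edge_next.
by rewrite -E2 -E1 cycle_edge_sym cycle_edge_next.
Qed.

Lemma cycle_vertex_inj a b a' b' : e a b -> ~~ tree_edge a b ->
  e a' b' -> ~~ tree_edge a' b' -> cycle_vertex a b = cycle_vertex a' b' -> (a, b) = (a', b').
Proof.
move=> eab ntr eab' ntr' Ev.
have [c [cyc bac _ onc]] := fundamental_cycle eab ntr.
have [c' [cyc' _ on' onc']] := fundamental_cycle eab' ntr'.
have [vr _ vba] := cycle_vertex_spec eab ntr.
have evp : e (cycle_vertex a b) (parent (cycle_vertex a b)).
  by have /andP[epv _] := parent_edge_depth vr; rewrite se.
rewrite -Ev in onc'; have same := cac evp cyc cyc' onc onc'.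
have : cycle_edge c' b a by rewrite -same.
case/orP => /andP[uc /eqP nu]; move: (on' _ uc); rewrite nu.
  case/orP => [tba | /andP[/eqP-> /eqP->]] //.
  by move: ntr; rewrite tree_edge_sym tba.
case/orP => [tab | /andP[/eqP E1 /eqP E2]]; first by move: ntr; rewrite tab.
by move: vba; rewrite Ev -E1 -E2 eqxx.
Qed.

Lemma cactus_arcs_le : #|[set p : T * T | e p.1 p.2]| <= 3 * (#|T| - 1).
Proof.
set E := [set p : T * T | e p.1 p.2]; set Tr := [set p : T * T | tree_edge p.1 p.2].
have non_tree : #|E :\: Tr| <= #|T| - 1.
  have inj : {in E :\: Tr &, injective (fun p => cycle_vertex p.1 p.2)}.
    move=> [a b] [a' b']; rewrite !inE /= => /andP[n1 e1] /andP[n2 e2].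
    exact: cycle_vertex_inj.
  rewrite -(card_in_imset inj) subn1 -(cardsC1 r).
  apply/subset_leq_card/subsetP => z /imsetP[[a b]].
  rewrite !inE /= => /andP[ntr eab] ->.
  by case: (cycle_vertex_spec eab ntr).
have tree : #|Tr| <= 2 * (#|T| - 1).
  have sub : Tr \subset [set (v, parent v) | v in [set~ r]] :|: [set (parent v, v) | v in [set~ r]].
    apply/subsetP => [[u w]]; rewrite !inE /= /tree_edge /parent_edge.
    case/orP => [/andP[ur /eqP ->] | /andP[wr /eqP ->]]; apply/orP.
      by left; apply/imsetP; exists u; rewrite ?inE.
    by right; apply/imsetP; exists w; rewrite ?inE.
  apply: leq_trans (subset_leq_card sub) _; apply: leq_trans (leq_card_setU _ _) _.
  have := leq_imset_card (fun v => (v, parent v)) [set~ r].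
  have := leq_imset_card (fun v => (parent v, v)) [set~ r].
  by rewrite cardsC1; lia.
rewrite -(cardsID Tr E); have := subset_leq_card (subsetIr E Tr); lia.
Qed.

End SpanningTree.

Lemma sum_deg (T : finType) (e : rel T) :
  \sum_v deg e v = #|[set p : T * T | e p.1 p.2]|.
Proof.
rewrite -sum1_card (eq_bigl (fun p : T * T => true && e p.1 p.2)) => [|p]; last by rewrite inE.
rewrite -(pair_big_dep xpredT (fun i j => e i j) (fun _ _ => 1)).
by apply: eq_bigr => v _; rewrite /deg -sum1_card; apply: eq_bigl => y; rewrite inE.
Qed.

Lemma cactus_sum_deg_le (T : finType) (e : rel T) : simple_graph e -> cactus e ->
  \sum_v deg e v <= 3 * (#|T| - 1).
Proof.
move=> [irr se] [conn cac]; rewrite sum_deg.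
have [r _ | none] := pickP (fun _ : T => true); first exact: (cactus_arcs_le r conn se irr cac).
by apply: leq_trans (max_card _) _; rewrite card_prod (eq_card0 none).
Qed.

Lemma bridgeless_cactus_of_half_degrees (T : finType) (f : T -> nat) :
    (forall v, 0 < f v) -> 2 * \sum_v f v <= 3 * (#|T| - 1) ->
  exists e : rel T, [/\ simple_graph e, forall v, deg e v = 2 * f v, cactus e & bridgeless e].
Proof.
move=> fpos bound; have [r _ | none] := pickP (fun _ : T => true); last first.
  by exists (fun _ _ => false); do ![split] => // x; have := none x.
have cardT : 0 < #|T| by apply/card_gt0P; exists r.
have sum_ge : #|T| <= \sum_v f v by rewrite -sum1_card; apply: leq_sum => v _; apply: fpos.
have [Cs gCs countCs] :
    exists2 Cs, glued Cs & forall v, count (fun C => v \in C) Cs = if v \in [set: T] then f v else 0.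
  apply: (@glued_of_multiplicities _ (\sum_v f v - #|T|)) => [v _ | | ]; first exact: fpos.
    by rewrite cardsT; lia.
  rewrite (eq_bigl xpredT) => [|v]; last by rewrite inE.
  by rewrite sumnB ?sum1_card // => v _; apply: fpos.
have count_f v : count (fun C => v \in C) Cs = f v by rewrite countCs inE.
have cov v : covered Cs v by rewrite covered_count count_f.
have [sg cac br] := glued_bridgeless_cactus gCs cov.
by exists (cycles_rel Cs); split=> // v; rewrite glued_deg // count_f.
Qed.

Lemma sumn_nth_ord n (s : seq nat) : size s = n -> sumn s = \sum_(i < n) nth 0 s i.
Proof. by move=> sz; rewrite sumnE (big_nth 0) sz big_mkord. Qed.

Lemma all_nth_ord (P : pred nat) n (s : seq nat) :
  size s = n -> all P s <-> forall i : 'I_n, P (nth 0 s i).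
Proof.
move=> sz; split=> [/(all_nthP 0) Ps i | Ps]; first by apply: Ps; rewrite sz.
by apply/(all_nthP 0) => i; rewrite sz => ilt; apply: (Ps (Ordinal ilt)).
Qed.

Theorem theorem5p2 (n : nat) (d : seq nat) :
  3 <= n -> degree_sequence n d ->
  ((exists e : rel 'I_n, realization d e /\ cactus e /\ bridgeless e) <->
   ((sumn d)./2 <= (3 * (n - 1))./2 /\ all (fun k => ~~ odd k) d)).
Proof.
move=> _ [sd range + _]; rewrite (sumn_nth_ord sd) => even_sum.
split=> [[e [[sg degs] [cac br]]] | [bound /(all_nth_ord _ sd) deven]].
  split; last by apply/(all_nth_ord _ sd) => i; rewrite -degs cactus_deg_even.
  apply: half_leq; rewrite (eq_bigr (deg e)) => [|i _]; last by rewrite degs.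
  by have := cactus_sum_deg_le sg cac; rewrite card_ord.
set S := \sum_(i < n) nth 0 d i.
have half (i : 'I_n) : nth 0 d i = 2 * (nth 0 d i)./2.
  by rewrite mul2n -[LHS]odd_double_half (negbTE (deven i)).
have [e [sg degs cac br]] : exists e : rel 'I_n,
    [/\ simple_graph e, forall i, deg e i = 2 * (nth 0 d i)./2, cactus e & bridgeless e].
  apply: bridgeless_cactus_of_half_degrees => [i|].
    by move/(all_nth_ord _ sd)/(_ i): range; have := half i; lia.
  rewrite card_ord big_distrr -(eq_bigr _ (fun i _ => half i)) -/S.
  have := odd_double_half S; have := odd_double_half (3 * (n - 1)).
  by rewrite (negbTE even_sum); lia.
by exists e; split=> //; split=> // i; rewrite degs -half.
Qed.
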